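(* Let $\Gamma=\mathbb{Z}/2\times\mathbb{Z}$, let $S$ be a finite symmetric multiset of elements of $\Gamma$ not containing the identity and generating $\Gamma$, and let $a:\Gamma\curvearrowright X$ be a free Borel action on a standard Borel space $X$. If $(1,0)\in S$, then $\chi_B'(G(a,S))=|S|$.
   Context: $G(a,S)$ is the multigraph on $X$ with, for each $x$ and each occurrence of $\gamma$ in $S$, an edge between $x$ and $\gamma\cdot x$ (the occurrence of $\gamma$ at $x$ and the corresponding occurrence of $\gamma^{-1}$ at $\gamma\cdot x$ giving the same edge, so each vertex has degree $|S|$). $\chi_B'$ is the least number of colors in a Borel edge coloring, where distinct edges sharing a vertex receive distinct colors. *)

From HB Require Import structures.
From mathcomp Require Import all_boot all_order all_algebra.
From mathcomp Require Import all_classical all_reals all_analysis.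
From mathcomp Require Import Rstruct Rstruct_topology.
Set Implicit Arguments. Unset Strict Implicit. Unset Printing Implicit Defensive.
Import Order.TTheory GRing.Theory Num.Theory.
Local Open Scope classical_set_scope.
Local Open Scope ring_scope.

Definition Gamma : zmodType := ('Z_2 * int)%type.

Definition borel (T : topologicalType) : set (set T) := <<s @open T >>.

Definition borel_fun (T U : topologicalType) (f : T -> U) : Prop :=
  forall B : set U, borel B -> borel (f @^-1` B).

Definition polish (T : topologicalType) : Prop :=
  (exists D : set T, countable D /\ closure D = setT) /\
  exists d : T -> T -> Rdefinitions.R,
    [/\ (forall x y, 0 <= d x y) /\
        (forall x y, d x y = 0 <-> x = y),
        (forall x y, d x y = d y x),
        (forall x y z, d x z <= d x y + d y z),
        (forall A : set T, open A <->
            forall x, A x -> exists e : Rdefinitions.R, 0 < e /\ [set y | d x y < e] `<=` A) &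
        (forall u : nat -> T,
           (forall e : Rdefinitions.R, 0 < e -> exists N : nat, forall m n : nat,
               (N <= m)%N -> (N <= n)%N -> d (u m) (u n) < e) ->
           exists l : T, forall e : Rdefinitions.R, 0 < e ->
             exists N : nat, forall n : nat, (N <= n)%N -> d (u n) l < e)].

(* A standard Borel space is taken to be a Polish space equipped with its
   Borel sigma-algebra. *)
Definition standard_borel (X : topologicalType) : Prop := polish X.

Definition borel_action (X : topologicalType) (a : Gamma -> X -> X) : Prop :=
  [/\ (forall x, a 0 x = x),
      (forall g h x, a (g + h) x = a g (a h x)) &
      (forall g, borel_fun (a g))].

Definition free_action (X : Type) (a : Gamma -> X -> X) : Prop :=
  forall g x, a g x = x -> g = 0.

Definition symmetric_mset (S : seq Gamma) : Prop :=
  forall g : Gamma, count_mem g S = count_mem (- g) S.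

(* S generates Gamma as a group (Gamma is abelian: integer combinations). *)
Definition generates (S : seq Gamma) : Prop :=
  forall g : Gamma, exists k : nat -> int,
    g = \sum_(i < size S) (S`_i *~ k i).

Definition occ (S : seq Gamma) (i : nat) : nat := count_mem S`_i (take i S).

Definition kth_occ (S : seq Gamma) (y : Gamma) (k : nat) : nat :=
  find (fun j => (S`_j == y) && (count_mem y (take j S) == k)) (iota 0 (size S)).

(* The corresponding occurrence of the inverse: the occurrence of gamma with
   index i corresponds to the occurrence of gamma^{-1} with the same rank. *)
Definition partner (S : seq Gamma) (i : nat) : nat := kth_occ S (- S`_i) (occ S i).

(* The multigraph G(a,S): its edges are the half-edges (x, i), i < |S|,
   modulo the identification of (x, i) with (S_i . x, partner S i).
   An edge coloring with k colors is therefore a function c on half-edges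
   which is constant on identified pairs; it is proper iff distinct
   half-edges at the same vertex get distinct colors (no loops occur for a
   free action since 0 \notin S); it is Borel iff each x |-> c x i is Borel
   (the set of colors being discrete). *)
Definition borel_edge_coloring (X : topologicalType) (a : Gamma -> X -> X)
    (S : seq Gamma) (k : nat) (c : X -> nat -> nat) : Prop :=
  [/\ (forall x i, (i < size S)%N -> (c x i < k)%N),
      (forall x i, (i < size S)%N -> c (a S`_i x) (partner S i) = c x i),
      (forall x i j, (i < size S)%N -> (j < size S)%N -> i <> j -> c x i <> c x j) &
      (forall i m, (i < size S)%N -> borel [set x | c x i = m])].

Definition borel_edge_colorable (X : topologicalType) (a : Gamma -> X -> X)
    (S : seq Gamma) (k : nat) : Prop :=
  exists c : X -> nat -> nat, borel_edge_coloring a S k c.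

Definition borel_chromatic_index_eq (X : topologicalType) (a : Gamma -> X -> X)
    (S : seq Gamma) (k : nat) : Prop :=
  borel_edge_colorable a S k /\
  forall k', borel_edge_colorable a S k' -> (k <= k')%N.

(* The elements (e, n) of S with n > 0 give edges forming paths that climb n
   levels at a time; such a path is colored alternately with the indices p and
   [partner S p] of (e, n) and of its inverse, and the twist (1, 0), of order 2,
   gives a matching colored with its own index.  To do this in a Borel way, take
   a twist-invariant Borel set M of markers which, on every coset of the Z-factor
   in an orbit, is sparse and dense at a fixed scale [gap]; it comes from a Borel
   maximal independent set for the finitely many group elements of level at most
   [gap], which exists because the action is free.  The colors at x are read off
   the marker pattern z |-> [a (0, z) x \in M]: a p-path restarts its
   alternation at each vertex seeing a marker in its p-window, the edge leaving
   that vertex takes the twist color, and the twist edge there takes the color of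
   the pair left free.  Distinct windows lie at distinct distances below a marker,
   so at most one edge at a vertex gives up its color to the twist edge there.
   The lower bound is the degree |S|. *)

From HB Require Import structures.
From mathcomp Require Import all_boot all_order all_algebra.
From mathcomp Require Import all_classical all_reals all_analysis.
From mathcomp Require Import Rstruct Rstruct_topology.
From mathcomp Require Import zify ring lra.
Set Implicit Arguments. Unset Strict Implicit. Unset Printing Implicit Defensive.
Import Order.TTheory GRing.Theory Num.Theory.
Local Open Scope ring_scope.
Local Open Scope classical_set_scope.

Lemma find_iota0 (P : pred nat) n i :
  (i < n)%N -> P i -> (forall j, (j < i)%N -> ~~ P j) -> find P (iota 0 n) = i.
Proof.
move=> lt_in Pi before_i.
have hasP : has P (iota 0 n) by apply/hasP; exists i; rewrite ?mem_iota.
have lt_jn : (find P (iota 0 n) < n)%N by rewrite -[X in (_ < X)%N](size_iota 0 n) -has_find.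
have := nth_find 0 hasP; rewrite nth_iota // add0n => Pj.
case: (ltngtP (find P (iota 0 n)) i) => // [/before_i|]; first by rewrite Pj.
by move/(before_find 0); rewrite nth_iota // add0n Pi.
Qed.

Lemma count_mem_take_nth (T : eqType) (x0 : T) (s : seq T) (j i : nat) :
  (j < i < size s)%N -> nth x0 s j = nth x0 s i ->
  (count_mem (nth x0 s i) (take j s) < count_mem (nth x0 s i) (take i s))%N.
Proof.
move=> /andP[lt_ji lt_is] eq_ji.
have le_j1i : (j.+1 <= i)%N by [].
rewrite -(cat_take_drop j.+1 (take i s)) take_takel // count_cat.
rewrite (take_nth x0) ?(ltn_trans lt_ji) // -cats1 count_cat eq_ji /= eqxx.
lia.
Qed.

Lemma nth_occurrence (T : eqType) (x0 : T) (s : seq T) y k :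
  (k < count_mem y s)%N ->
  exists2 j, (j < size s)%N & nth x0 s j = y /\ count_mem y (take j s) = k.
Proof.
elim: s k => [|x s IHs] k //=; case: (eqVneq x y) => [->|neq_xy] /=.
  case: k => [|k] lt_k; first by exists 0%N; rewrite ?take0.
  have [|j lt_js [sj cj]] := IHs k; first by lia.
  by exists j.+1 => //=; rewrite eqxx cj.
move=> lt_k; have [|j lt_js [sj cj]] := IHs k; first by lia.
by exists j.+1 => //=; rewrite (negbTE neq_xy) cj.
Qed.

Section Partner.
Variable S : seq Gamma.

Lemma kth_occ_occ i : (i < size S)%N -> kth_occ S S`_i (occ S i) = i.
Proof.
move=> lt_iS; apply: find_iota0 => //; first by rewrite /occ !eqxx.
move=> j lt_ji; apply/negP => /andP[/eqP eq_ji /eqP cnt].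
have lt_jiS : (j < i < size S)%N by rewrite lt_ji.
by have := count_mem_take_nth lt_jiS eq_ji; rewrite -/(occ S i) -cnt ltnn.
Qed.

Lemma occ_lt_count i : (i < size S)%N -> (occ S i < count_mem (S`_i)%R S)%N.
Proof.
move=> lt_iS; rewrite /occ -[X in (_ < count_mem _ X)%N](cat_take_drop i).
by rewrite count_cat (drop_nth 0) //= eqxx; lia.
Qed.

Hypothesis symS : symmetric_mset S.

Lemma partner_spec i : (i < size S)%N ->
  [/\ (partner S i < size S)%N, S`_(partner S i) = - S`_i &
      occ S (partner S i) = occ S i].
Proof.
move=> lt_iS; have := occ_lt_count lt_iS; rewrite symS.
case/(nth_occurrence 0) => j lt_jS [Sj cj].
by rewrite /partner -cj -Sj -/(occ S j) kth_occ_occ // Sj.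
Qed.

Lemma partner_lt i : (i < size S)%N -> (partner S i < size S)%N.
Proof. by case/partner_spec. Qed.

Lemma nth_partner i : (i < size S)%N -> S`_(partner S i) = - S`_i.
Proof. by case/partner_spec. Qed.

Lemma partnerK i : (i < size S)%N -> partner S (partner S i) = i.
Proof.
move=> lt_iS; case: (partner_spec lt_iS) => _ Sp eq_occ.
by rewrite {1}/partner Sp opprK eq_occ kth_occ_occ.
Qed.

End Partner.

Definition twist : Gamma := ((1 : 'Z_2)%R, 0).

Lemma twist_addK : twist + twist = 0. Proof. by apply/eqP. Qed.

Lemma opp_twist : - twist = twist. Proof. by apply/eqP. Qed.

Lemma Z2_cases (e : 'Z_2) : e = 0 \/ e = 1.
Proof. by case: e => [[|[|n]] lt_n2] //=; [left | right]; apply/val_inj. Qed.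

Lemma level0_twist (g : Gamma) : g != 0 -> g.2 = 0 -> g = twist.
Proof. by case: g => e z /= + z0; rewrite z0; case: (Z2_cases e) => ->. Qed.

Definition shift (d : int) (f : int -> bool) : int -> bool := fun z => f (z + d).

Lemma shift0 f : shift 0 f = f.
Proof. by apply: funext => z; rewrite /shift addr0. Qed.

Lemma shiftD d e f : shift d (shift e f) = shift (d + e) f.
Proof. by apply: funext => z; rewrite /shift addrA. Qed.

Definition sparse (W : nat) (f : int -> bool) :=
  forall u v, f u -> f v -> `|u - v| <= W%:Z -> u = v.

Definition dense (W : nat) (f : int -> bool) :=
  forall z, exists2 w, `|z - w| <= W%:Z & f w.

Lemma dense_shift W d f : dense W f -> dense W (shift d f).
Proof.
move=> dnf z; have [w le_zw fw] := dnf (z + d).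
exists (w - d); last by rewrite /shift subrK.
by rewrite opprB addrA.
Qed.

(* The coloring at a vertex only depends on its marker pattern [f]: [f z] says
   that the vertex [z] levels above lies on a marker.  Colors are indices in [S]. *)
Section Coloring.
Variable S : seq Gamma.
Hypothesis symS : symmetric_mset S.
Hypothesis S_neq0 : (0 : Gamma) \notin S.
Hypothesis twistS : twist \in S.
Implicit Types (f g : int -> bool) (p i j : nat) (b : bool).

Definition level i : int := (S`_i).2.
Definition step i : nat := `|level i|%N.
Definition forward p : bool := (p < size S)%N && (0 < level p).

(* The windows of the two ends of the p-edges at a vertex lie in the p-th block
   of width [2 * bound] below it; since markers are more than [gap] apart, a
   vertex sees a marker in at most one of all these windows. *)
Definition bound : nat := (\sum_(i < size S) step i).+1.
Definition block p : nat := (2 * bound * p)%N.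
Definition gap : nat := (2 * bound * size S)%N.
Definition horizon : nat := (2 * gap + 2)%N.
Definition itwist : nat := index twist S.

Definition window p f (z : int) : bool :=
  has (fun s => f (z - (block p + s)%N%:Z)) (iota 0 (step p)).
Definition marked p b f : bool := window p f (- (b * step p)%N%:Z).
Definition age p f : nat :=
  find (fun k => window p f (- (k.+1 * step p)%N%:Z)) (iota 0 horizon).
Definition fwd_color p f : nat :=
  if window p f 0 then itwist else if odd (age p f) then partner S p else p.
Definition side_index p b : nat := if b then partner S p else p.
Definition side_color p b f : nat :=
  if b then fwd_color p (shift (- (step p)%:Z) f) else fwd_color p f.
Definition opposite p c : nat := if c == p then partner S p else p.
Definition slots : seq (nat * bool) :=
  [seq (p, b) | p <- [seq p <- iota 0 (size S) | 0 < level p], b <- [:: false; true]].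
Definition first_marked f : nat := find (fun pb => marked pb.1 pb.2 f) slots.
Definition slot_color j f : nat :=
  if (j < size slots)%N then
    let: (p, b) := nth (0%N, false) slots j in opposite p (side_color p (~~ b) f)
  else itwist.
Definition twist_color f : nat := slot_color (first_marked f) f.
(* An edge of negative level is colored from its upper end. *)
Definition color i f : nat :=
  if S`_i == twist then (if i == itwist then twist_color f else i)
  else if 0 < level i then fwd_color i f
  else fwd_color (partner S i) (shift (level i) f).

Lemma itwist_lt : (itwist < size S)%N.
Proof. by rewrite index_mem. Qed.

Lemma nth_itwist : S`_itwist = twist.
Proof. exact: nth_index. Qed.

Lemma step_lt_bound p : (p < size S)%N -> (step p < bound)%N.
Proof. by move=> lt_pS; rewrite ltnS (bigD1 (Ordinal lt_pS)) //= leq_addr. Qed.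

Lemma level_neq0 i : (i < size S)%N -> S`_i != twist -> level i != 0.
Proof.
move=> lt_iS; apply: contra => /eqP l0; apply/eqP/level0_twist => //.
by apply: contraNneq S_neq0 => <-; rewrite mem_nth.
Qed.

Lemma level_partner i : (i < size S)%N -> level (partner S i) = - level i.
Proof. by move=> lt_iS; rewrite /level nth_partner. Qed.

Lemma partner_twist i : (i < size S)%N -> S`_i = twist -> partner S i = i.
Proof. by move=> lt_iS Si; rewrite /partner Si opp_twist -Si kth_occ_occ. Qed.

Section Forward.
Variable p : nat.
Hypothesis fwd_p : forward p.

Lemma forward_lt : (p < size S)%N. Proof. by case/andP: fwd_p. Qed.

Lemma level_forward : level p = (step p)%:Z.
Proof. by case/andP: fwd_p => _ /ltW lp; rewrite /step gez0_abs. Qed.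

Lemma step_forward_gt0 : (0 < step p)%N.
Proof. by case/andP: fwd_p => _ lp; rewrite /step absz_gt0 gt_eqF. Qed.

Lemma forward_neq_twist : S`_p != twist.
Proof. by case/andP: fwd_p => _; apply: contraTneq => Sp; rewrite /level Sp. Qed.

Lemma level_partner_forward : level (partner S p) < 0.
Proof. by case/andP: fwd_p => lt_pS lp; rewrite level_partner // oppr_lt0. Qed.

Lemma partner_neq_twist : S`_(partner S p) != twist.
Proof.
apply: contraTneq level_partner_forward => Sq.
by rewrite /level Sq ltxx.
Qed.

Lemma partner_forward_neq : partner S p != p.
Proof.
apply: contraTneq level_partner_forward => ->.
by case/andP: fwd_p => _ /ltW; rewrite leNgt.
Qed.

Lemma forward_neq_itwist : p != itwist.
Proof. by apply: contraNneq forward_neq_twist => ->; rewrite nth_itwist. Qed.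

Lemma partner_neq_itwist : partner S p != itwist.
Proof. by apply: contraNneq partner_neq_twist => ->; rewrite nth_itwist. Qed.

End Forward.

Lemma pair_disjoint p p' c : forward p -> forward p' ->
  c \in [:: p; partner S p] -> c \in [:: p'; partner S p'] -> p = p'.
Proof.
move=> fp fp'; have [_ lp] := andP fp; have [_ lp'] := andP fp'.
rewrite !inE => /orP[]/eqP-> /orP[]/eqP // eq_c.
- by have := level_partner_forward fp'; rewrite -eq_c ltNge (ltW lp).
- by have := level_partner_forward fp; rewrite eq_c ltNge (ltW lp').
- by rewrite -(partnerK symS (forward_lt fp)) eq_c partnerK // forward_lt.
Qed.

Lemma twist_notin_pair p k : forward p -> S`_k = twist -> k \notin [:: p; partner S p].
Proof.
move=> fp Sk; rewrite !inE; apply/norP; split; apply: contraTneq isT => ek.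
  by have := forward_neq_twist fp; rewrite -ek Sk eqxx.
by have := partner_neq_twist fp; rewrite -ek Sk eqxx.
Qed.

Lemma opposite_in p c : opposite p c \in [:: p; partner S p].
Proof. by rewrite /opposite !inE; case: ifP; rewrite eqxx ?orbT. Qed.

Lemma opposite_neq p c : forward p -> c \in [:: p; partner S p] -> opposite p c != c.
Proof.
move=> fp; rewrite /opposite !inE => /orP[]/eqP->; rewrite ?eqxx.
  exact: partner_forward_neq.
by rewrite eq_sym (negbTE (partner_forward_neq fp)) partner_forward_neq.
Qed.

Lemma window_shift p d f z : window p (shift d f) z = window p f (z + d).
Proof. by apply: eq_has => s /=; rewrite /shift addrAC. Qed.

Lemma markedP p b f :
  reflect (exists2 s, (s < step p)%N & f (- (block p + b * step p + s)%N%:Z))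
          (marked p b f).
Proof.
apply: (iffP hasP) => [[s] | [s lt_s fs]].
  by rewrite mem_iota add0n => /andP[_ lt_s] fs; exists s => //; move: fs; congr f; lia.
by exists s; [rewrite mem_iota add0n | move: fs; congr f; lia].
Qed.

Lemma block_div p r : (r < 2 * bound)%N -> ((block p + r) %/ (2 * bound) = p)%N.
Proof.
by move=> lt_r; rewrite /block [X in (X + r)%N]mulnC divnMDl // divn_small // addn0.
Qed.

Lemma block_lt_gap p r : (p < size S)%N -> (r < 2 * bound)%N -> (block p + r < gap)%N.
Proof.
move=> lt_pS lt_r; rewrite /gap /block.
have : (2 * bound * p.+1 <= 2 * bound * size S)%N by rewrite leq_mul2l lt_pS orbT.
by rewrite mulnS; lia.
Qed.

Lemma sparse_nat_eq f u v : sparse gap f -> (u < gap)%N -> (v < gap)%N ->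
  f (- u%:Z) -> f (- v%:Z) -> u = v.
Proof.
move=> spf lt_u lt_v fu fv.
have le_uv : `|- u%:Z - - v%:Z| <= gap%:Z by rewrite ler_norml; lia.
by have := spf _ _ fu fv le_uv; lia.
Qed.

Lemma marked_unique f p p' b b' : sparse gap f -> forward p -> forward p' ->
  marked p b f -> marked p' b' f -> p = p' /\ b = b'.
Proof.
move=> spf fp fp' /markedP[s lt_s fs] /markedP[s' lt_s' fs'].
have lt_n := step_lt_bound (forward_lt fp).
have lt_n' := step_lt_bound (forward_lt fp').
have lt_r : (b * step p + s < 2 * bound)%N by case: b {fs}; lia.
have lt_r' : (b' * step p' + s' < 2 * bound)%N by case: b' {fs'}; lia.
have eq_pos : (block p + (b * step p + s) = block p' + (b' * step p' + s'))%N.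
  rewrite !addnA; apply: (sparse_nat_eq spf) fs fs'; rewrite -addnA.
    exact: block_lt_gap (forward_lt fp) lt_r.
  exact: block_lt_gap (forward_lt fp') lt_r'.
have eq_p : p = p' by rewrite -(block_div p lt_r) eq_pos block_div.
split=> //; subst p'; move: eq_pos => /addnI.
by case: b b' {fs fs' lt_r lt_r'} => -[] //=; lia.
Qed.

Lemma mem_slots p b : ((p, b) \in slots) = forward p.
Proof.
apply/allpairsP/idP => [[[q c] [/= + _ [eq_pq _]]] | fp].
  by rewrite mem_filter mem_iota add0n /forward andbC eq_pq.
exists (p, b); split=> //=; last by case: b.
by rewrite mem_filter mem_iota add0n; case/andP: fp => -> ->.
Qed.

Lemma twist_color_marked f p b : sparse gap f -> forward p -> marked p b f ->
  twist_color f = opposite p (side_color p (~~ b) f).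
Proof.
move=> spf fp mpb; rewrite /twist_color /slot_color /first_marked.
set P := fun pb : nat * bool => marked pb.1 pb.2 f.
have has_slot : has P slots by apply/hasP; exists (p, b); rewrite ?mem_slots.
have lt_find : (find P slots < size slots)%N by rewrite -has_find.
rewrite lt_find; have := nth_find (0%N, false) has_slot; have := mem_nth (0%N, false) lt_find.
case: (nth _ _ _) => q c; rewrite mem_slots /P /= => fq mqc.
by have [-> ->] := marked_unique spf fq fp mqc mpb.
Qed.

Lemma twist_color_unmarked f :
  (forall p b, forward p -> ~~ marked p b f) -> twist_color f = itwist.
Proof.
move=> unmarked; rewrite /twist_color /slot_color ifF //; apply/negbTE; rewrite -has_find.
by apply/hasP => -[[p b] + mpb]; rewrite mem_slots => /(unmarked p b)/negP.
Qed.

Lemma marked_fwd p f : marked p false f = window p f 0.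
Proof. by rewrite /marked mul0n oppr0. Qed.

Lemma marked_bwd p f : marked p true f = window p f (- (step p)%:Z).
Proof. by rewrite /marked mul1n. Qed.

Lemma age_bounded g p : dense gap g -> forward p ->
  has (fun k => window p g (- (k.+1 * step p)%N%:Z)) (iota 0 (2 * gap + 1)).
Proof.
move=> dng fp; have n_gt0 := step_forward_gt0 fp.
have [w] := dng (- (step p + block p + gap)%N%:Z).
rewrite ler_norml => /andP[lo_w hi_w] gw.
have [e def_w] : exists e : nat, w = - e%:Z by exists `|w|%N; lia.
subst w; set q := ((e - block p) %/ step p)%N; set r := ((e - block p) %% step p)%N.
have def_e := divn_eq (e - block p) (step p); rewrite -/q -/r in def_e.
have lt_r : (r < step p)%N by rewrite /r ltn_pmod.
have q_gt0 : (0 < q)%N by rewrite lt0n; apply: contraTneq isT => q0; lia.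
have le_q : (q.-1 <= q.-1 * step p)%N by rewrite leq_pmulr.
have def_q : (q.-1 * step p = q * step p - step p)%N by rewrite -subn1 mulnBl mul1n.
apply/hasP; exists q.-1; first by rewrite mem_iota add0n; lia.
apply/hasP; exists r; first by rewrite mem_iota add0n.
by rewrite prednK //; move: gw; congr g; lia.
Qed.

Lemma age_shift f p : dense gap f -> forward p -> ~~ window p f (- (step p)%:Z) ->
  age p f = (age p (shift (- (step p)%:Z) f)).+1.
Proof.
move=> dnf fp unmarked; set g := shift _ f.
have := age_bounded (dense_shift (- (step p)%:Z) dnf) fp; rewrite -/g => has_g.
rewrite /age; have -> : horizon = (2 * gap + 1).+1 by rewrite /horizon addnS.
have split_iota : iota 0 (2 * gap + 1).+1 = iota 0 (2 * gap + 1) ++ [:: (2 * gap + 1)%N].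
  by rewrite -addn1 iotaD.
rewrite [in RHS]split_iota find_cat has_g /= mul1n (negbTE unmarked).
rewrite -(addn0 1%N) iotaDl find_map; congr _.+1; apply: eq_find => k /=.
by rewrite window_shift; congr window; lia.
Qed.

Lemma side_colors_neq f p : sparse gap f -> dense gap f -> forward p ->
  side_color p false f != side_color p true f.
Proof.
move=> spf dnf fp; rewrite /side_color /fwd_color window_shift add0r.
have p_neq := forward_neq_itwist fp; have q_neq := partner_neq_itwist fp.
have pq_neq := partner_forward_neq fp.
case: (boolP (window p f 0)) => [m0 | _].
  have m1 : ~~ window p f (- (step p)%:Z).
    by apply/negP; rewrite -marked_fwd -marked_bwd in m0 * => /(marked_unique spf fp fp m0)[].
  by rewrite (negbTE m1); case: ifP; rewrite eq_sym.
case: (boolP (window p f (- (step p)%:Z))) => [_ | m1]; first by case: ifP.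
by rewrite (age_shift dnf fp m1) /=; case: odd; rewrite // eq_sym.
Qed.

Lemma side_color_in p b f : side_color p b f \in [:: itwist; p; partner S p].
Proof.
by rewrite /side_color /fwd_color !inE; case: b; repeat case: ifP => _; rewrite eqxx ?orbT.
Qed.

Lemma side_color_itwist p b f : forward p -> (side_color p b f == itwist) = marked p b f.
Proof.
move=> fp; have fwd_itwist g : (fwd_color p g == itwist) = window p g 0.
  rewrite /fwd_color; case: ifP; rewrite ?eqxx //; case: ifP => _ _; apply/negbTE.
    exact: partner_neq_itwist.
  exact: forward_neq_itwist.
by case: b; rewrite /side_color fwd_itwist ?window_shift ?add0r ?marked_bwd ?marked_fwd.
Qed.

Lemma side_color_pair p b f : forward p -> ~~ marked p b f ->
  side_color p b f \in [:: p; partner S p].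
Proof.
move=> fp; rewrite -side_color_itwist //; have := side_color_in p b f.
by rewrite inE => /orP[->|].
Qed.

Lemma color_side_index p b f : forward p -> color (side_index p b) f = side_color p b f.
Proof.
move=> fp; rewrite /color /side_index /side_color; case: b.
  rewrite (negbTE (partner_neq_twist fp)) ltNge (ltW (level_partner_forward fp)) /=.
  by rewrite partnerK ?forward_lt // level_partner ?forward_lt // level_forward.
by rewrite (negbTE (forward_neq_twist fp)); case/andP: fp => _ ->.
Qed.

Lemma side_index_surj i : (i < size S)%N -> S`_i != twist ->
  exists p b, forward p /\ i = side_index p b.
Proof.
move=> lt_iS Si; have l_neq0 := level_neq0 lt_iS Si.
case: (ltP 0 (level i)) => [l_gt0 | l_le0]; first by exists i, false; rewrite /forward lt_iS.
exists (partner S i), true; split; last by rewrite /side_index partnerK.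
by rewrite /forward partner_lt // level_partner // oppr_gt0 lt_neqAle l_neq0.
Qed.

Lemma twist_colorP f : sparse gap f ->
  twist_color f = itwist /\ (forall p b, forward p -> ~~ marked p b f) \/
  exists p b, [/\ forward p, marked p b f & twist_color f = opposite p (side_color p (~~ b) f)].
Proof.
move=> spf; case: (boolP [exists pb : 'I_(size S) * bool, forward pb.1 && marked pb.1 pb.2 f]).
  case/existsP => -[p b] /andP[fp mpb]; right; exists p, b; split=> //.
  exact: twist_color_marked.
move=> /existsPn unmarked; have {}unmarked p b : forward p -> ~~ marked p b f.
  by move=> fp; have := unmarked (Ordinal (forward_lt fp), b); rewrite /= fp.
by left; split=> //; apply: twist_color_unmarked.
Qed.

Lemma twist_color_neq_twist f k : sparse gap f -> S`_k = twist -> k != itwist ->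
  twist_color f != k.
Proof.
move=> spf Sk k_neq; case: (twist_colorP spf) => [[-> _] | [p [b [fp _ ->]]]].
  by rewrite eq_sym.
by apply: contraTneq (opposite_in p (side_color p (~~ b) f)) => ->; apply: twist_notin_pair.
Qed.

Lemma color_twist_side f k p b : sparse gap f -> S`_k = twist -> forward p ->
  color k f != side_color p b f.
Proof.
move=> spf Sk fp; have pair_itwist := twist_notin_pair fp nth_itwist.
rewrite /color Sk eqxx; case: (eqVneq k itwist) => [_ | k_neq]; last first.
  apply: contraTneq (side_color_in p b f) => <-.
  by rewrite in_cons negb_or k_neq twist_notin_pair.
case: (boolP (marked p b f)) => [mpb | unmarked].
  rewrite (twist_color_marked spf fp mpb); move: mpb; rewrite -side_color_itwist // => /eqP->.
  by apply: contraTneq (opposite_in p (side_color p (~~ b) f)) => ->.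
have side_pair := side_color_pair fp unmarked.
case: (twist_colorP spf) => [[-> _] | [p' [b' [fp' mpb' ->]]]].
  by apply: contraTneq side_pair => <-.
case: (eqVneq p' p) => [eq_p | neq_p].
  subst p'; have eq_b : b' = ~~ b.
    by move: unmarked mpb'; case: (b); case: (b') => //= /negP nm /nm.
  by rewrite eq_b negbK opposite_neq.
apply: contra_neq neq_p => eq_c; apply: pair_disjoint fp' fp _ side_pair.
by rewrite -eq_c opposite_in.
Qed.

Lemma side_colors_inj f p b p' b' : sparse gap f -> dense gap f ->
  forward p -> forward p' -> (p, b) != (p', b') ->
  side_color p b f != side_color p' b' f.
Proof.
move=> spf dnf fp fp' neq_pb; case: (eqVneq p p') => [eq_p | neq_p].
  subst p'; have -> : b' = ~~ b by move: neq_pb; case: b b' => -[]; rewrite ?eqxx.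
  by case: b {neq_pb}; rewrite /= ?side_colors_neq // eq_sym side_colors_neq.
apply: contra_neq neq_p => eq_c.
case: (boolP (marked p b f)) => [mpb | unmarked].
  have: marked p' b' f by rewrite -side_color_itwist // -eq_c side_color_itwist.
  by case/(marked_unique spf fp fp' mpb).
apply: (pair_disjoint fp fp' (side_color_pair fp unmarked)).
rewrite eq_c side_color_pair //.
by rewrite -side_color_itwist // -eq_c side_color_itwist.
Qed.

Lemma color_lt f i : (i < size S)%N -> (color i f < size S)%N.
Proof.
have fwd_lt p g : (p < size S)%N -> (fwd_color p g < size S)%N.
  by move=> lt_pS; rewrite /fwd_color; repeat case: ifP => _; rewrite ?itwist_lt ?partner_lt.
move=> lt_iS; rewrite /color; case: ifP => _; last first.
  by case: ifP => _; apply: fwd_lt; rewrite ?partner_lt.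
case: ifP => // _; rewrite /twist_color /slot_color; case: ifP => [lt_j | _]; last exact: itwist_lt.
have := mem_nth (0%N, false) lt_j; case: (nth _ _ _) => p b; rewrite mem_slots => fp.
have := opposite_in p (side_color p (~~ b) f); rewrite !inE => /orP[]/eqP->.
  exact: forward_lt.
by rewrite partner_lt ?forward_lt.
Qed.

Lemma color_partner f i : (i < size S)%N ->
  color (partner S i) (shift (level i) f) = color i f.
Proof.
move=> lt_iS; case: (eqVneq S`_i twist) => [Si | Si].
  by rewrite partner_twist // /level Si shift0.
have [p [b [fp ->]]] := side_index_surj lt_iS Si.
have -> : partner S (side_index p b) = side_index p (~~ b).
  by case: b; rewrite /side_index ?partnerK ?forward_lt.
rewrite !color_side_index // /side_color /side_index.
case: b => /=; first by rewrite level_partner ?forward_lt // (level_forward fp).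
by rewrite (level_forward fp) shiftD addNr shift0.
Qed.

Lemma color_inj f i j : sparse gap f -> dense gap f ->
  (i < size S)%N -> (j < size S)%N -> i != j -> color i f != color j f.
Proof.
move=> spf dnf lt_iS lt_jS neq_ij.
case: (eqVneq S`_i twist) => Si; case: (eqVneq S`_j twist) => Sj.
- rewrite /color Si Sj eqxx.
  have [ei | i_neq] := eqVneq i itwist; have [ej | j_neq] := eqVneq j itwist.
  + by rewrite ei ej eqxx in neq_ij.
  + exact: twist_color_neq_twist.
  + by rewrite eq_sym twist_color_neq_twist.
  + exact: neq_ij.
- have [p [b [fp ->]]] := side_index_surj lt_jS Sj.
  by rewrite color_side_index // color_twist_side.
- have [p [b [fp ->]]] := side_index_surj lt_iS Si.
  by rewrite color_side_index // eq_sym color_twist_side.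
have [p [b [fp def_i]]] := side_index_surj lt_iS Si.
have [p' [b' [fp' def_j]]] := side_index_surj lt_jS Sj.
rewrite def_i def_j !color_side_index // side_colors_inj //.
by apply: contraNneq neq_ij => -[eq_p eq_b]; rewrite def_i def_j eq_p eq_b.
Qed.

End Coloring.

Lemma seqI_closed (T : Type) (I : eqType) (C : set (set T)) (s : seq I) (A : I -> set T) :
  C setT -> setI_closed C -> (forall i, i \in s -> C (A i)) ->
  C [set x | forall i, i \in s -> A i x].
Proof.
move=> CT CI; elim: s => [_ | i s IHs CA].
  by rewrite (_ : [set x | _] = setT) //; apply/seteqP; split.
rewrite (_ : [set x | _] = A i `&` [set x | forall j, j \in s -> A j x]).
  apply: CI; first by apply: CA; rewrite mem_head.
  by apply: IHs => j js; apply: CA; rewrite in_cons js orbT.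
apply/seteqP; split=> x /=.
  by move=> Ax; split=> [|j js]; apply: Ax; rewrite in_cons ?eqxx ?js ?orbT.
by case=> Aix Asx j; rewrite in_cons => /orP[/eqP -> | /Asx].
Qed.

Section BorelSets.
Variable X : topologicalType.
Implicit Types A B : set X.

Lemma borel_open A : open A -> borel A.
Proof. exact: sub_sigma_algebra. Qed.

Lemma borel0 : borel (@set0 X).
Proof. exact: sigma_algebra0. Qed.

Lemma borelC A : borel A -> borel (~` A).
Proof. by move=> bA; rewrite -setTD; apply: sigma_algebraCD. Qed.

Lemma borelT : borel (@setT X).
Proof. by rewrite -setC0; apply: borelC; apply: borel0. Qed.

Lemma borel_bigcup (F : nat -> set X) : (forall n, borel (F n)) -> borel (\bigcup_n F n).
Proof. exact: sigma_algebra_bigcup. Qed.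

Lemma borelU A B : borel A -> borel B -> borel (A `|` B).
Proof. by move=> bA bB; rewrite -bigcup2E; apply: borel_bigcup => -[|[|n]] //=; apply: borel0. Qed.

Lemma borelI : setI_closed (@borel X).
Proof.
by move=> A B bA bB; rewrite -[A `&` B]setCK setCI; apply: borelC; apply: borelU; apply: borelC.
Qed.

Definition borel_pred (P : X -> bool) := borel [set x | P x].
Definition borel_nat (h : X -> nat) := forall m, borel_pred (fun x => h x == m).

Lemma borel_pred_const b : borel_pred (fun _ => b).
Proof.
rewrite /borel_pred; case: b.
  have -> : [set _ : X | true] = setT by apply/seteqP; split.
  exact: borelT.
have -> : [set _ : X | false] = set0 by apply/seteqP; split.
exact: borel0.
Qed.

Lemma borel_predN P : borel_pred P -> borel_pred (fun x => ~~ P x).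
Proof.
move=> bP; rewrite /borel_pred (_ : [set x | _] = ~` [set x | P x]); first exact: borelC.
by apply/seteqP; split=> x /= /negP.
Qed.

Lemma borel_predI P Q : borel_pred P -> borel_pred Q -> borel_pred (fun x => P x && Q x).
Proof.
move=> bP bQ; rewrite /borel_pred (_ : [set x | _] = [set x | P x] `&` [set x | Q x]).
  exact: borelI.
by apply/seteqP; split=> x /= /andP.
Qed.

Lemma borel_predU P Q : borel_pred P -> borel_pred Q -> borel_pred (fun x => P x || Q x).
Proof.
move=> bP bQ; rewrite /borel_pred (_ : [set x | _] = [set x | P x] `|` [set x | Q x]).
  exact: borelU.
by apply/seteqP; split=> x /= /orP.
Qed.

Lemma borel_pred_has (T : Type) (s : seq T) (P : T -> X -> bool) :
  (forall t, borel_pred (P t)) -> borel_pred (fun x => has (P^~ x) s).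
Proof.
move=> bP; elim: s => [|t s IHs] /=; first exact: borel_pred_const.
exact: borel_predU.
Qed.

Lemma borel_nat_const c : borel_nat (fun _ => c).
Proof. by move=> m; apply: borel_pred_const. Qed.

Lemma borel_nat_find (T : Type) (s : seq T) (P : T -> X -> bool) :
  (forall t, borel_pred (P t)) -> borel_nat (fun x => find (P^~ x) s).
Proof.
move=> bP; elim: s => [|t s IHs] m /=; first exact: borel_pred_const.
case: m => [|m].
  rewrite /borel_pred (_ : [set x | _] = [set x | P t x]); first exact: bP.
  by apply/seteqP; split=> x /=; case: (P t x).
rewrite /borel_pred (_ : [set x | _] = [set x | ~~ P t x && (find (P^~ x) s == m)]).
  by apply: borel_predI; [apply: borel_predN | apply: IHs].
by apply/seteqP; split=> x /=; case: (P t x).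
Qed.

Lemma borel_pred_comp (h : X -> nat) (Q : nat -> X -> bool) :
  borel_nat h -> (forall n, borel_pred (Q n)) -> borel_pred (fun x => Q (h x) x).
Proof.
move=> bh bQ; rewrite /borel_pred (_ : [set x | _] = \bigcup_n [set x | (h x == n) && Q n x]).
  by apply: borel_bigcup => n; apply: borel_predI.
apply/seteqP; split=> x /=; first by exists (h x); rewrite //= eqxx.
by case=> n _ /andP[/eqP ->].
Qed.

Lemma borel_nat_comp (h : X -> nat) (G : nat -> X -> nat) :
  borel_nat h -> (forall n, borel_nat (G n)) -> borel_nat (fun x => G (h x) x).
Proof. by move=> bh bG m; apply: (borel_pred_comp bh (fun n => bG n m)). Qed.

Lemma borel_nat_if P h1 h2 : borel_pred P -> borel_nat h1 -> borel_nat h2 ->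
  borel_nat (fun x => if P x then h1 x else h2 x).
Proof.
move=> bP b1 b2 m; rewrite /borel_pred.
rewrite (_ : [set x | _] = [set x | P x && (h1 x == m) || ~~ P x && (h2 x == m)]).
  by apply: borel_predU; apply: borel_predI; [| apply: b1 | apply: borel_predN | apply: b2].
by apply/seteqP; split=> x /=; case: (P x); rewrite /= ?orbF.
Qed.

End BorelSets.

Section BorelColoring.
Variables (X : topologicalType) (S : seq Gamma).

Definition borel_pattern (F : X -> int -> bool) := forall z, borel_pred (fun x => F x z).

Lemma window_borel F p z : borel_pattern F -> borel_pred (fun x => window S p (F x) z).
Proof. by move=> bF; apply: borel_pred_has => s; apply: bF. Qed.

Lemma fwd_color_borel F p : borel_pattern F -> borel_nat (fun x => fwd_color S p (F x)).
Proof.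
move=> bF; apply: borel_nat_if; [exact: window_borel | exact: borel_nat_const |].
apply: borel_nat_if; [| exact: borel_nat_const | exact: borel_nat_const].
apply: (borel_pred_comp (Q := fun n _ => odd n)); last by move=> n; apply: borel_pred_const.
by apply: borel_nat_find => k; apply: window_borel.
Qed.

Lemma side_color_borel F p b : borel_pattern F -> borel_nat (fun x => side_color S p b (F x)).
Proof.
move=> bF; case: b; last exact: fwd_color_borel.
by apply: fwd_color_borel => z; apply: bF.
Qed.

Lemma twist_color_borel F : borel_pattern F -> borel_nat (fun x => twist_color S (F x)).
Proof.
move=> bF; apply: (borel_nat_comp (G := fun j x => slot_color S j (F x))) => [|j].
  by apply: borel_nat_find => -[p b]; apply: window_borel.
rewrite /slot_color; case: (j < size (slots S))%N; last exact: borel_nat_const.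
case: (nth _ _ _) => p b; apply: (borel_nat_comp (G := fun c _ => opposite S p c)).
  exact: side_color_borel.
by move=> c; apply: borel_nat_const.
Qed.

Lemma color_borel F i : borel_pattern F -> borel_nat (fun x => color S i (F x)).
Proof.
move=> bF; rewrite /color; case: (S`_i == twist).
  by case: (i == itwist S); [apply: twist_color_borel | apply: borel_nat_const].
by case: (0 < level S i); apply: fwd_color_borel => // z; apply: bF.
Qed.

End BorelColoring.

Section Polish.
Variable X : topologicalType.
Hypothesis polX : polish X.

Lemma polish_T1 (q : X) : open (~` [set q]).
Proof.
case: polX => _ [d [[d_ge0 d_eq0] _ _ d_open _]].
apply/d_open => y neq_yq; exists (d y q); split=> [|z /= lt_z eq_zq].
  by rewrite lt_neqAle d_ge0 andbT eq_sym; apply/eqP => /d_eq0.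
by move: lt_z; rewrite eq_zq ltxx.
Qed.

Lemma polish_countable_basis : exists U : nat -> set X,
  (forall n, open (U n)) /\
  forall (O : set X) x, open O -> O x -> exists n, U n x /\ U n `<=` O.
Proof.
case: polX => -[D [D_countable D_dense]] [d [[_ d_eq0] d_sym d_tri d_open _]].
have [code code_inj] := countable_injP _ D_countable.
have ball_open (x : X) r : open [set y | d x y < r].
  apply/d_open => y lt_y; exists (r - d x y); split=> [|z /= lt_z]; first by rewrite subr_gt0.
  by have := d_tri x y z; lra.
pose B i k := [set y | exists2 c, D c & code c = i /\ d c y < k.+1%:R^-1].
exists (fun n => if unpickle n is Some (i, k) then B i k else set0); split.
  move=> n; case: (unpickle n) => [[i k]|]; last exact: open0.
  apply/d_open => y [c Dc [code_c lt_cy]].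
  have [e [e_gt0 sub_e]] := (d_open _).1 (ball_open c _) y lt_cy.
  by exists e; split=> // z /sub_e lt_cz; exists c.
move=> O x /d_open O_open Ox; have [e [e_gt0 sub_e]] := O_open x Ox.
have [k] : exists k, 0 + k.+1%:R^-1 < e / 2 by apply: ltr_add_invr; rewrite divr_gt0.
rewrite add0r => lt_k.
have [c [Dc lt_xc]] : exists c, D c /\ d x c < k.+1%:R^-1.
  have : closure D x by rewrite D_dense.
  move/(_ [set y | d x y < k.+1%:R^-1]); case.
    by apply: open_nbhs_nbhs; split; [apply: ball_open | rewrite /= (proj2 (d_eq0 x x))].
  by move=> y [Dy lt_y]; exists y.
exists (pickle (code c, k)); rewrite pickleK; split; first by exists c; rewrite // d_sym.
move=> y [c' Dc' [eq_code lt_y]]; apply: sub_e => /=.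
have eq_c : c' = c by apply: code_inj; rewrite ?in_setE.
subst c'; apply: (le_lt_trans (d_tri x c y)); rewrite [e]splitr.
by apply: ltrD; apply: lt_trans lt_k.
Qed.

End Polish.

Section Markers.
Variables (X : topologicalType) (G : zmodType) (a : G -> X -> X).
Hypothesis a0 : forall x, a 0 x = x.
Hypothesis aD : forall g h x, a (g + h) x = a g (a h x).
Hypothesis a_borel : forall g, borel_fun (a g).
Hypothesis a_free : forall g x, a g x = x -> g = 0.
Variable U : nat -> set X.
Hypothesis U_open : forall n, open (U n).
Hypothesis U_basis : forall (O : set X) x, open O -> O x -> exists n, U n x /\ U n `<=` O.
Hypothesis X_T1 : forall q : X, open (~` [set q]).
Variable F : seq G.
Hypothesis F_sym : forall g, g \in F -> - g \in F.

Definition avoiding (A : set X) : set X :=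
  [set x | forall g, g \in F -> g != 0 -> ~ A (a g x)].

Definition independent (A : set X) := A `<=` avoiding A.

Definition isolated n : set X := U n `&` avoiding (U n).

(* Kechris-Solecki-Todorcevic: every [isolated n] is independent, and stage [n]
   adds its points that avoid the set built so far; freeness and the countable
   basis make the [isolated n] cover X, whence maximality. *)
Fixpoint greedy n : set X :=
  if n is m.+1 then greedy m `|` (isolated m `&` avoiding (greedy m)) else set0.

Definition marker : set X := \bigcup_n greedy n.

Lemma isolated_cover x : exists n, isolated n x.
Proof.
pose O := [set y | forall g, g \in F -> g != 0 -> y <> a g x].
have O_open : open O.
  apply: (seqI_closed (A := fun g => [set y | g != 0 -> y <> a g x])) openT openI _ => g _.
  case: (eqVneq g 0) => [-> | neq_g].
    by rewrite (_ : [set y | _] = setT); [apply: openT | apply/seteqP; split].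
  rewrite (_ : [set y | _] = ~` [set a g x]); first exact: X_T1.
  by apply/seteqP; split=> y /=; [move/(_ isT) | move=> + _].
have Ox : O x by move=> g _ neq_g /esym/a_free/eqP; apply/negP.
have [n [Unx sub_n]] := U_basis O_open Ox.
by exists n; split=> // g Fg neq_g /sub_n/(_ g Fg neq_g).
Qed.

Lemma greedy_independent n : independent (greedy n).
Proof.
elim: n => [|n IHn] x //= + g Fg neq_g.
have neq_Ng : - g != 0 by rewrite oppr_eq0.
have aNK y : a (- g) (a g y) = y by rewrite -aD addNr a0.
case=> [gx | [[_ Ux] avoid_x]] [ggx | [[Ugx _] avoid_gx]].
- exact: IHn gx g Fg neq_g ggx.
- by apply: avoid_gx (F_sym Fg) neq_Ng _; rewrite aNK.
- exact: avoid_x g Fg neq_g ggx.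
- exact: Ux g Fg neq_g Ugx.
Qed.

Lemma greedy_sub n m : (n <= m)%N -> greedy n `<=` greedy m.
Proof.
elim: m => [|m IHm]; first by rewrite leqn0 => /eqP ->.
by rewrite leq_eqVlt ltnS => /orP[/eqP -> // | /IHm sub_nm x /sub_nm]; left.
Qed.

Lemma marker_independent : independent marker.
Proof.
move=> x [n _ gx] g Fg neq_g [m _ ggx].
apply: (greedy_independent (greedy_sub (leq_maxl n m) gx) Fg neq_g).
exact: greedy_sub (leq_maxr n m) _ ggx.
Qed.

Lemma marker_maximal x : exists2 g, g \in 0 :: F & marker (a g x).
Proof.
have [n isolated_x] := isolated_cover x.
case: (pselect (avoiding (greedy n) x)) => [avoid_x | /existsNP[g]].
  by exists 0; rewrite ?mem_head // a0; exists n.+1 => //; right.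
move=> /not_implyP[Fg /not_implyP[_ /contrapT ggx]].
by exists g; [rewrite in_cons Fg orbT | exists n].
Qed.

Lemma avoiding_borel A : borel A -> borel (avoiding A).
Proof.
move=> bA; apply: (seqI_closed (A := fun g => [set x | g != 0 -> ~ A (a g x)])) => //.
- exact: borelT.
- exact: borelI.
move=> g _; case: (eqVneq g 0) => [-> | neq_g].
  by rewrite (_ : [set x | _] = setT); [apply: borelT | apply/seteqP; split].
rewrite (_ : [set x | _] = ~` (a g @^-1` A)); first by apply: borelC; apply: a_borel.
by apply/seteqP; split=> x /=; [move/(_ isT) | move=> + _].
Qed.

Lemma marker_borel : borel marker.
Proof.
apply: borel_bigcup; elim=> [|n IHn] /=; first exact: borel0.
apply: borelU => //; apply: borelI; last exact: avoiding_borel.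
by apply: borelI; [apply: borel_open | apply: avoiding_borel; apply: borel_open].
Qed.

End Markers.

Definition near (W : nat) : seq Gamma :=
  [seq (e, k%:Z - W%:Z) | e <- [:: 0; 1], k <- iota 0 W.*2.+1].

Lemma mem_near W (g : Gamma) : (g \in near W) = (`|g.2| <= W%:Z).
Proof.
apply/allpairsP/idP => [[[e k] [_ + ->]] | ].
  by rewrite mem_iota add0n ltnS -mul2n ler_norml /= => le_k; lia.
case: g => e z le_z.
have /andP[lo_z hi_z] : (- W%:Z <= z) && (z <= W%:Z) by rewrite -ler_norml.
exists (e, absz (z + W%:Z)); split.
- by case: (Z2_cases e) => ->; rewrite !inE eqxx ?orbT.
- by rewrite mem_iota add0n ltnS -mul2n /=; lia.
- by congr pair; rewrite /=; lia.
Qed.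

Section LevelMarkers.
Variables (X : topologicalType) (a : Gamma -> X -> X).
Hypothesis polX : polish X.
Hypothesis a0 : forall x, a 0 x = x.
Hypothesis aD : forall g h x, a (g + h) x = a g (a h x).
Hypothesis a_borel : forall g, borel_fun (a g).
Hypothesis a_free : free_action a.

Lemma exists_level_markers W : exists M : set X,
  [/\ borel M, forall y, M (a twist y) <-> M y,
      forall y g, M y -> M (a g y) -> `|g.2| <= W%:Z -> g.2 = 0 &
      forall x, exists2 g : Gamma, `|g.2| <= W%:Z & M (a g x)].
Proof.
have [U [U_open U_basis]] := polish_countable_basis polX.
have near_sym g : g \in near W -> - g \in near W by rewrite !mem_near normrN.
pose M0 := marker a U (near W).
have M0_indep : independent a (near W) M0 := marker_independent a0 aD near_sym.
exists (M0 `|` a twist @^-1` M0); split.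
- by apply: borelU; [| apply: a_borel]; apply: marker_borel.
- move=> y; rewrite /= -aD twist_addK a0.
  by split=> -[]; [right | left | right | left].
- move=> y g My Mgy le_g.
  have [e1 e1_0 M0y] : exists2 e : Gamma, e.2 = 0 & M0 (a e y).
    by case: My; [exists 0; rewrite ?a0 | exists twist].
  have [e2 e2_0 M0gy] : exists2 e : Gamma, e.2 = 0 & M0 (a e (a g y)).
    by case: Mgy; [exists 0; rewrite ?a0 | exists twist].
  pose h := e2 + g - e1.
  have h2 : h.2 = g.2 by rewrite /h /= e1_0 e2_0 add0r subr0.
  have [h0 | neq_h] := eqVneq h 0; first by rewrite -h2 h0.
  have near_h : h \in near W by rewrite mem_near h2.
  by case: (M0_indep _ M0y h near_h neq_h); rewrite -aD /h subrK aD.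
- move=> x; have [g g_in M0gx] := marker_maximal a0 a_free U_basis (polish_T1 polX) (near W) x.
  exists g; last by left.
  by move: g_in; rewrite in_cons mem_near => /orP[/eqP-> |]; rewrite ?normr0.
Qed.

End LevelMarkers.

Section Patterns.
Variables (X : topologicalType) (a : Gamma -> X -> X) (M : set X).
Hypothesis aD : forall g h x, a (g + h) x = a g (a h x).
Hypothesis M_twist : forall y, M (a twist y) <-> M y.

Definition pattern (x : X) : int -> bool := fun z => `[< M (a (0, z) x) >].

Lemma addGamma e1 z1 e2 z2 : ((e1, z1) + (e2, z2) : Gamma) = (e1 + e2, z1 + z2).
Proof. by []. Qed.

Lemma M_level e z y : M (a (e, z) y) <-> M (a (0, z) y).
Proof.
case: (Z2_cases e) => -> //.
have -> : ((1, z) : Gamma) = twist + (0, z) by rewrite addGamma addr0 add0r.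
by rewrite aD M_twist.
Qed.

Lemma pattern_shift g x : pattern (a g x) = shift g.2 (pattern x).
Proof.
apply: funext => z; rewrite /pattern /shift -aD; apply/asbool_equiv_eq.
by case: g => e w; rewrite addGamma add0r M_level.
Qed.

Lemma pattern_borel : (forall g, borel_fun (a g)) -> borel M -> borel_pattern pattern.
Proof.
move=> a_borel M_borel z; rewrite /borel_pred (_ : [set x | _] = a (0, z) @^-1` M).
  exact: a_borel.
by apply/seteqP; split=> x /=; rewrite asboolE.
Qed.

Variable W : nat.

Lemma pattern_sparse x :
  (forall y g, M y -> M (a g y) -> `|g.2| <= W%:Z -> g.2 = 0) -> sparse W (pattern x).
Proof.
move=> M_sparse u v; rewrite /pattern !asboolE => Mu Mv le_uv.
have := M_sparse _ ((0, v - u) : Gamma) Mu; rewrite -aD.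
rewrite addGamma addr0 subrK.
by move=> /(_ Mv) /=; rewrite -normrN opprB => /(_ le_uv) /eqP; rewrite subr_eq0 => /eqP.
Qed.

Lemma pattern_dense x :
  (forall x, exists2 g : Gamma, `|g.2| <= W%:Z & M (a g x)) -> dense W (pattern x).
Proof.
move=> M_dense z; have [g le_g Mg] := M_dense (a (0, z) x).
exists (z + g.2); first by rewrite opprD addrA subrr sub0r normrN.
have : M (a (0, g.2) (a (0, z) x)) by case: g {le_g} Mg => e w /M_level.
by rewrite -aD addGamma add0r addrC /pattern asboolE.
Qed.

End Patterns.

Lemma borel_edge_coloring_size_le (X : topologicalType) (a : Gamma -> X -> X) S k c (x : X) :
  borel_edge_coloring a S k c -> (size S <= k)%N.
Proof.
case=> c_lt _ c_inj _.
have uniq_c : uniq [seq c x i | i <- iota 0 (size S)].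
  rewrite map_inj_in_uniq ?iota_uniq // => i j; rewrite !mem_iota !add0n => lt_i lt_j.
  by apply: contra_eq => /eqP neq_ij; apply/eqP; apply: c_inj.
have sub_c : {subset [seq c x i | i <- iota 0 (size S)] <= iota 0 k}.
  by move=> y /mapP[i]; rewrite !mem_iota !add0n => lt_i ->; apply: c_lt.
by have := uniq_leq_size uniq_c sub_c; rewrite size_map !size_iota.
Qed.

Lemma pattern_borel_edge_coloring (X : topologicalType) (a : Gamma -> X -> X) S (M : set X) :
  (forall g h x, a (g + h) x = a g (a h x)) -> (forall g, borel_fun (a g)) ->
  symmetric_mset S -> (0 : Gamma) \notin S -> twist \in S ->
  borel M -> (forall y, M (a twist y) <-> M y) ->
  (forall y g, M y -> M (a g y) -> `|g.2| <= (gap S)%:Z -> g.2 = 0) ->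
  (forall x, exists2 g : Gamma, `|g.2| <= (gap S)%:Z & M (a g x)) ->
  borel_edge_coloring a S (size S) (fun x i => color S i (pattern a M x)).
Proof.
move=> aD a_borel symS S_neq0 twistS M_borel M_twist M_sparse M_dense; split.
- by move=> x i; apply: color_lt.
- by move=> x i lt_i; rewrite pattern_shift // color_partner.
- move=> x i j lt_i lt_j /eqP neq_ij; apply/eqP; apply: color_inj => //.
    exact: pattern_sparse.
  exact: pattern_dense.
- move=> i m _; rewrite (_ : [set x | _] = [set x | color S i (pattern a M x) == m]).
    exact: (color_borel S i (pattern_borel a_borel M_borel) m).
  by apply/seteqP; split=> x /= /eqP.
Qed.

Theorem lemma11 (X : topologicalType) (a : Gamma -> X -> X) (S : seq Gamma) :
  standard_borel X -> (exists x : X, True) ->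
  borel_action a -> free_action a ->
  symmetric_mset S -> (0 : Gamma) \notin S -> generates S ->
  ((1 : 'Z_2)%R, (0 : int)) \in S ->
  borel_chromatic_index_eq a S (size S).
Proof.
move=> polX [x _] [a0 aD a_borel] a_free symS S_neq0 _ twistS.
split=> [|k [c col_c]]; last exact: borel_edge_coloring_size_le x col_c.
have [M [M_borel M_twist M_sparse M_dense]] :=
  exists_level_markers polX a0 aD a_borel a_free (gap S).
by exists (fun x i => color S i (pattern a M x)); apply: pattern_borel_edge_coloring.
Qed.
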